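(* Let $0<p<1$, let $n\ge 1$, $0\le m\le n$ and $d\ge 1$ be integers, and let $X_1,\ldots,X_n$ be i.i.d. Bernoulli random variables with $P(X_i=1)=p$. Let $L_n$ be the length of the longest run of consecutive $1$'s in $X_1,\ldots,X_n$ (with $L_n=0$ if there is no $1$). Consider the finite set of states $\mathcal{S}=\{(l,j): 0\le l\le m,\ 0\le j\le \min(l,d-1)\}$, where $l$ records the number of $1$'s observed so far and $j$ the length of the current trailing run of $1$'s (the longest suffix of the form $1\cdots1$ of length less than $d$). For $t=1,\ldots,n$ let $\mathbf{N}_t(m)$ be the $\mathcal{S}\times\mathcal{S}$ matrix whose only nonzero entries are \[ \mathbf{N}_t(m)\big((l,j),(l+1,j+1)\big)=\frac{m-l}{n-t+1}\quad\text{if } l+1\le m \text{ and } j+1\le d-1, \] \[ \mathbf{N}_t(m)\big((l,j),(l,0)\big)=\frac{n-m-t+l+1}{n-t+1}, \] (all other entries, in particular transitions that would complete a run of $d$ ones, being $0$). Let $\boldsymbol{\xi}_0$ be the row vector indexed by $\mathcal{S}$ with entry $1$ at $(0,0)$ and $0$ elsewhere, and $\mathbf{1}$ the all-ones row vector indexed by $\mathcal{S}$. Then \[ P\Big(L_n<d \,\Big|\, \sum_{i=1}^n X_i=m\Big)=\boldsymbol{\xi}_0\prod_{t=1}^{n}\mathbf{N}_t(m)\,\mathbf{1}^{\top}. \] In particular this conditional probability does not depend on $p$.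
   Context: The matrices $\mathbf{N}_t(m)$ are the essential (non-absorbing) parts of the transition matrices of a nonhomogeneous Markov chain imbedding the outcome of a uniformly random arrangement of $m$ ones and $n-m$ zeros: at step $t$, given $l$ ones among the first $t-1$ positions, the next symbol is $1$ with probability $(m-l)/(n-t+1)$ and $0$ with probability $(n-m-(t-1-l))/(n-t+1)$; entering a run of $d$ ones corresponds to absorption and is excluded from the essential part. *)

From HB Require Import structures.
From mathcomp Require Import all_boot all_order all_algebra.
Set Implicit Arguments. Unset Strict Implicit. Unset Printing Implicit Defensive.
Import Order.TTheory GRing.Theory Num.Theory.
Local Open Scope ring_scope.

(* Outcomes of X_1..X_n : x : {ffun 'I_n -> bool}, x i = true iff X_(i+1) = 1. *)
Definition outcome (n : nat) := {ffun 'I_n -> bool}.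

Definition nones (n : nat) (x : outcome n) : nat := #|[set i | x i]|.

Definition bprob (R : realFieldType) (p : R) (n : nat) (A : pred (outcome n)) : R :=
  \sum_(x : outcome n | A x) p ^+ nones x * (1 - p) ^+ (n - nones x).

Definition bcondprob (R : realFieldType) (p : R) (n : nat)
  (A B : pred (outcome n)) : R :=
  bprob p (predI A B) / bprob p B.

Definition is_run (n : nat) (x : outcome n) (i j : nat) : bool :=
  [forall k : 'I_n, ((i <= k) && (k < j))%N ==> x k].

Definition longest_run (n : nat) (x : outcome n) : nat :=
  \max_(i < n.+1) \max_(j < n.+1 | (i <= j)%N && is_run x i j) (j - i)%N.

Definition state (m d : nat) : finType := {s : 'I_m.+1 * 'I_d | (s.2 <= s.1)%N}.

Definition st_l (m d : nat) (s : state m d) : nat := (val s).1.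
Definition st_j (m d : nat) (s : state m d) : nat := (val s).2.

Definition Nentry (R : realFieldType) (n m d t : nat) (a b : state m d) : R :=
  (if [&& st_l b == (st_l a).+1, st_j b == (st_j a).+1,
        ((st_l a).+1 <= m)%N & ((st_j a).+1 <= d.-1)%N]
   then (m%:R - (st_l a)%:R) / (n%:R - t%:R + 1) else 0)
  + (if (st_l b == st_l a) && (st_j b == 0%N)
     then (n%:R - m%:R - t%:R + (st_l a)%:R + 1) / (n%:R - t%:R + 1) else 0).

Definition Nmat (R : realFieldType) (n m d t : nat) : 'M[R]_#|state m d| :=
  \matrix_(a, b) @Nentry R n m d t (enum_val a) (enum_val b).

Definition Nprod (R : realFieldType) (n m d : nat) : 'M[R]_#|state m d| :=
  \big[mulmx/1%:M]_(t < n) @Nmat R n m d t.+1.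

Definition xi0 (R : realFieldType) (m d : nat) : 'rV[R]_#|state m d| :=
  \row_a (if (st_l (enum_val a) == 0%N) && (st_j (enum_val a) == 0%N) then 1 else 0).

Definition ones_row (R : realFieldType) (k : nat) : 'rV[R]_k := const_mx 1.

From HB Require Import structures.
From mathcomp Require Import all_boot all_order all_algebra.
From mathcomp Require Import zify ring.
Import Order.TTheory GRing.Theory Num.Theory.

Set Implicit Arguments.
Unset Strict Implicit.
Unset Printing Implicit Defensive.

(* Given [nones x = m], every outcome has weight p ^+ m * (1 - p) ^+ (n - m), so
   the conditional probability is the fraction of the 'C(n, m) words with m ones
   that contain no run of d ones.  Reading the matrix product from the right, the
   entry of N_(n-k+1) ... N_n 1^T at state (l, j) is the fraction of the
   'C(k, m - l) completions of length k carrying the m - l missing ones that avoid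
   a d-run after a trailing run of j ones: the transition weights q / (k + 1) and
   (k + 1 - q) / (k + 1) are exactly 'C(k, q - 1) / 'C(k + 1, q) and
   'C(k, q) / 'C(k + 1, q), which turn Pascal's rule into the first-symbol
   recursion for these counts. *)

Fixpoint words (r : nat) : seq bitseq :=
  if r is r'.+1 then map (cons true) (words r') ++ map (cons false) (words r')
  else [:: [::]].

Lemma mem_words r v : (v \in words r) = (size v == r).
Proof.
elim: r v => [|r IH] [|b v] //=; rewrite mem_cat.
  by apply/negbTE/norP; split; apply/mapP => -[].
have cons_inj c : injective (@cons bool c) by move=> ? ? [].
have cons_notin c w : c :: w \notin map (cons (~~ c)) (words r).
  by apply/mapP => -[? _ []]; case: c.
rewrite eqSS -IH; case: b.
  by rewrite mem_map // (negbTE (cons_notin true v)) orbF.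
by rewrite mem_map // (negbTE (cons_notin false v)).
Qed.

Lemma uniq_words r : uniq (words r).
Proof.
elim: r => [|r IH] //=.
rewrite cat_uniq !map_inj_uniq ?IH //=; try by move=> ? ? [].
by rewrite andbT; apply/hasPn => _ /mapP[v _ ->]; apply/mapP => -[].
Qed.

Lemma count_words_ones r q : count (fun v => count id v == q) (words r) = 'C(r, q).
Proof.
elim: r q => [|r IH] [|q] //=; rewrite count_cat !count_map.
  rewrite (eq_count (a2 := pred0)) // count_pred0.
  by rewrite (eq_count (a2 := fun v => count id v == 0)) // IH !bin0.
rewrite binS -!IH addnC; congr (_ + _); exact: eq_count.
Qed.

Section RunAvoidance.
Variable d : nat.
Hypothesis d_gt0 : 0 < d.

Fixpoint avoids_run (j : nat) (w : bitseq) : bool :=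
  if w is b :: w' then
    if b then (j.+1 < d) && avoids_run j.+1 w' else avoids_run 0 w'
  else true.

Definition run_free (s : bitseq) : Prop :=
  forall i, ~~ all (nth false s) (iota i d).

Lemma nth_nseq_true_cat j w k :
  nth false (nseq j true ++ w) k = (k < j) || nth false w (k - j).
Proof. by rewrite nth_cat size_nseq nth_nseq; case: ltnP. Qed.

Lemma run_free_nseq j : j < d -> run_free (nseq j true).
Proof.
move=> lt_jd i; apply/allPn; exists (i + d.-1); first by rewrite mem_iota; lia.
by rewrite -[nseq _ _]cats0 nth_nseq_true_cat nth_nil orbF -leqNgt; lia.
Qed.

Lemma not_run_free_nseq w : ~ run_free (nseq d true ++ w).
Proof.
move=> /(_ 0) /allPn[k]; rewrite mem_iota add0n => /andP[_ lt_kd].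
by rewrite nth_nseq_true_cat lt_kd.
Qed.

Lemma run_free_nseq_false j w :
  j < d -> run_free (nseq j true ++ false :: w) <-> run_free w.
Proof.
move=> lt_jd.
have shift k : nth false (nseq j true ++ false :: w) (j.+1 + k) = nth false w k.
  by rewrite nth_nseq_true_cat ltnNge ltnW ?leq_addr //= subSn ?leq_addr // addKn.
split=> free i.
  have /allPn[k] := free (j.+1 + i); rewrite mem_iota => k_in zero_k.
  apply/allPn; exists (k - j.+1); first by rewrite mem_iota; lia.
  by rewrite -shift subnKC //; lia.
case: (leqP i j) => [le_ij | lt_ji].
  apply/allPn; exists j; first by rewrite mem_iota; lia.
  by rewrite nth_nseq_true_cat ltnn subnn.
have /allPn[k] := free (i - j.+1); rewrite mem_iota => k_in zero_k.
apply/allPn; exists (j.+1 + k); first by rewrite mem_iota; lia.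
by rewrite shift.
Qed.

Lemma avoids_runE j w : j < d -> avoids_run j w <-> run_free (nseq j true ++ w).
Proof.
elim: w j => [|[] w IH] j lt_jd /=.
- by rewrite cats0; split=> // _; exact: run_free_nseq.
- have -> : nseq j true ++ true :: w = nseq j.+1 true ++ w.
    by rewrite !cat_nseq /ncons iterSr.
  case: (ltnP j.+1 d) => [lt_j1d | le_dj1]; first exact: IH.
  by rewrite (_ : j.+1 = d); [split=> // /not_run_free_nseq | lia].
- by rewrite IH // run_free_nseq_false.
Qed.

Definition count_avoiding (r q j : nat) : nat :=
  count (fun v => (count id v == q) && avoids_run j v) (words r).

Lemma count_avoidingS r q j :
  count_avoiding r.+1 q j =
  (if (0 < q) && (j.+1 < d) then count_avoiding r q.-1 j.+1 else 0)
  + count_avoiding r q 0.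
Proof.
rewrite /count_avoiding /= count_cat !count_map; congr (_ + _).
case: q => [|q] /=; first by rewrite (eq_count (a2 := pred0)) ?count_pred0.
case: ifP => lt_j1d; first by apply: eq_count => v /=; rewrite eqSS lt_j1d.
by rewrite (eq_count (a2 := pred0)) ?count_pred0 // => v /=; rewrite lt_j1d andbF.
Qed.

Lemma count_avoiding_eq0 r q j : r < q -> count_avoiding r q j = 0.
Proof.
move=> lt_rq; rewrite /count_avoiding (eq_in_count (a2 := pred0)) ?count_pred0 //.
move=> v; rewrite mem_words => /eqP size_v /=.
by apply/negbTE; rewrite negb_and; apply/orP; left; have := count_size id v; lia.
Qed.

End RunAvoidance.

Section OutcomesAsWords.
Variable n : nat.

Definition word_of (x : outcome n) : bitseq := [seq x i | i <- enum 'I_n].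

Lemma size_word_of x : size (word_of x) = n.
Proof. by rewrite size_map size_enum_ord. Qed.

Lemma nth_word_of x (i : 'I_n) : nth false (word_of x) i = x i.
Proof. by rewrite (nth_map i) ?nth_ord_enum // size_enum_ord. Qed.

Lemma word_of_inj : injective word_of.
Proof. by move=> x y eq_xy; apply/ffunP => i; rewrite -!nth_word_of eq_xy. Qed.

Lemma nones_word_of x : nones x = count id (word_of x).
Proof. by rewrite /nones cardsE cardE /enum_mem size_filter count_map enumT. Qed.

Lemma card_word_of (Q : pred bitseq) :
  #|[pred x : outcome n | Q (word_of x)]| = count Q (words n).
Proof.
rewrite cardE /enum_mem size_filter -enumT -(count_map word_of Q).
apply/permP/uniq_perm; first by rewrite map_inj_uniq ?enum_uniq //; exact: word_of_inj.
  exact: uniq_words.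
move=> v; rewrite mem_words; apply/mapP/idP => [[x _ ->] | /eqP size_v].
  by rewrite size_word_of.
exists [ffun i : 'I_n => nth false v i]; first by rewrite mem_enum.
apply: (@eq_from_nth _ false); rewrite ?size_word_of size_v // => k lt_kn.
by rewrite (nth_word_of _ (Ordinal lt_kn)) ffunE.
Qed.

Lemma longest_run_ltE d x : 0 < d -> longest_run x < d <-> run_free d (word_of x).
Proof.
move=> d_gt0.
have is_run_window i j : is_run x i j -> j <= n -> (i <= i + d <= j) ->
    all (nth false (word_of x)) (iota i d).
  move=> /forallP run_ij le_jn /andP[_ le_idj]; apply/allP => k; rewrite mem_iota => k_in.
  have lt_kn : k < n by lia.
  by rewrite (nth_word_of _ (Ordinal lt_kn)); apply: (implyP (run_ij _)) => /=; lia.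
split=> [lt_Ld i | free].
  apply/negP => /allP window.
  have le_idn : i + d <= n.
    rewrite leqNgt; apply/negP => over.
    suff : nth false (word_of x) (i + d.-1) by rewrite nth_default ?size_word_of //; lia.
    by apply: window; rewrite mem_iota; lia.
  have run_id : is_run x i (i + d).
    apply/forallP => k; apply/implyP => k_in.
    by rewrite -nth_word_of; apply: window; rewrite mem_iota.
  have : d <= longest_run x.
    have lt_in : i < n.+1 by lia.
    have lt_idn : i + d < n.+1 by lia.
    apply: leq_trans (leq_bigmax (Ordinal lt_in)).
    apply: leq_trans (leq_bigmax_cond (Ordinal lt_idn) _).
      by rewrite /=; lia.
    by rewrite /= run_id andbT; lia.
  lia.
suff : longest_run x <= d.-1 by lia.
apply/bigmax_leqP => i _; apply/bigmax_leqP => j /andP[le_ij run_ij].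
rewrite leqNgt; apply/negP => long.
have le_jn : j <= n by rewrite -ltnS.
by apply/negP: (free i); rewrite negbK (is_run_window i j) //; lia.
Qed.

End OutcomesAsWords.

Local Open Scope ring_scope.

Lemma mul_bin_diag_div (R : numFieldType) k q : (0 < q)%N ->
  q%:R / k.+1%:R * 'C(k.+1, q)%:R = 'C(k, q.-1)%:R :> R.
Proof.
case: q => // q _; rewrite mulrAC -natrM -mul_bin_diag natrM mulrAC.
by rewrite divff ?mul1r // pnatr_eq0.
Qed.

Lemma mul_bin_down_div (R : numFieldType) k q :
  (k.+1 - q)%:R / k.+1%:R * 'C(k.+1, q)%:R = 'C(k, q)%:R :> R.
Proof.
rewrite mulrAC -natrM -mul_bin_down natrM mulrAC.
by rewrite divff ?mul1r // pnatr_eq0.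
Qed.

Lemma sum_if_pred1 (R : nzSemiRingType) (T : finType) (P : pred T) (a : T)
    (c : R) (h : T -> R) :
  P =1 pred1 a -> \sum_b (if P b then c else 0) * h b = c * h a.
Proof.
move=> P_a; rewrite (bigD1 a) //= P_a /= eqxx big1 ?addr0 // => b ne_ba.
by rewrite P_a /= (negbTE ne_ba) mul0r.
Qed.

Section TailProducts.
Variables (R : realFieldType) (n m d : nat).
Hypothesis d_gt0 : (0 < d)%N.
Local Notation S := (state m d).
Local Notation N t := (Nmat R n m d t).

Lemma eq_state (a b : S) : (a == b) = (st_l a == st_l b) && (st_j a == st_j b).
Proof. by case: a b => [[la ja] ?] [[lb jb] ?]. Qed.

Lemma st_l_le (s : S) : (st_l s <= m)%N.
Proof. by rewrite -ltnS; exact: ltn_ord. Qed.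

Definition state0 : S := exist _ (ord0, Ordinal d_gt0) (leqnn 0).

Definition state_zero (s : S) : S := exist _ ((val s).1, Ordinal d_gt0) (leq0n _).

(* Junk value [s] when (l + 1, j + 1) is not a state. *)
Definition state_one (s : S) : S :=
  insubd s (inord (st_l s).+1, insubd (Ordinal d_gt0) (st_j s).+1).

Lemma state_oneE s : (st_l s < m)%N -> ((st_j s).+1 < d)%N ->
  st_l (state_one s) = (st_l s).+1 /\ st_j (state_one s) = (st_j s).+1.
Proof.
move=> lt_lm lt_j1d; have le_jl : (st_j s <= st_l s)%N := valP s.
have j1E : val (insubd (Ordinal d_gt0) (st_j s).+1) = (st_j s).+1 by rewrite insubdK.
rewrite /st_l /st_j insubdK /= ?j1E ?inordK //.
by rewrite unfold_in /= j1E inordK.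
Qed.

Definition tail_prod k : 'M[R]_#|S| := \big[mulmx/1%:M]_(n - k <= t < n) N t.+1.

Definition tail_mass k (s : S) : R :=
  (tail_prod k *m (ones_row R #|S|)^T) (enum_rank s) 0.

Lemma tail_prodS k : (k < n)%N -> tail_prod k.+1 = N (n - k)%N *m tail_prod k.
Proof.
move=> lt_kn; rewrite /tail_prod big_ltn; last lia.
by rewrite (_ : (n - k.+1).+1 = n - k)%N //; lia.
Qed.

Lemma Nprod_tail : Nprod R n m d = tail_prod n.
Proof. by rewrite /tail_prod subnn big_mkord. Qed.

Lemma Nmat_mulE t (V : 'cV[R]_#|S|) s :
  (N t *m V) (enum_rank s) 0 = \sum_(b : S) Nentry R n t s b * V (enum_rank b) 0.
Proof.
rewrite mxE (reindex enum_rank) /=; last exact: onW_bij (enum_rank_bij S).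
by apply: eq_bigr => b _; rewrite mxE !enum_rankK.
Qed.

Lemma xi0_mulE (M : 'M[R]_#|S|) :
  (xi0 R m d *m M *m (ones_row R #|S|)^T) 0 0
  = (M *m (ones_row R #|S|)^T) (enum_rank state0) 0.
Proof.
rewrite -mulmxA mxE (reindex enum_rank) /=; last exact: onW_bij (enum_rank_bij S).
under eq_bigr do rewrite mxE enum_rankK.
by rewrite (sum_if_pred1 (a := state0)) ?mul1r // => b; rewrite /= eq_state.
Qed.

Lemma tail_massS k s : (k < n)%N -> (m - st_l s <= k.+1)%N ->
  tail_mass k.+1 s =
    (if (0 < m - st_l s)%N && ((st_j s).+1 < d)%N
     then (m - st_l s)%:R / k.+1%:R * tail_mass k (state_one s) else 0)
    + (k.+1 - (m - st_l s))%:R / k.+1%:R * tail_mass k (state_zero s).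
Proof.
move=> lt_kn le_qk1; have le_lm := st_l_le s.
rewrite /tail_mass tail_prodS // -mulmxA Nmat_mulE /Nentry.
under eq_bigr do rewrite mulrDl.
have denE : n%:R - (n - k)%N%:R + 1 = k.+1%:R :> R.
  by rewrite natrB ?(ltnW lt_kn) // -natr1; ring.
rewrite big_split /= denE; congr (_ + _).
  case: ifP => [/andP[lt_0q lt_j1d] | not_one].
    have lt_lm : (st_l s < m)%N by lia.
    have [l1E j1E] := state_oneE lt_lm lt_j1d.
    have lt_jd1 : (st_j s < d.-1)%N by lia.
    rewrite (sum_if_pred1 (a := state_one s)) ?natrB // => b.
    by rewrite /= eq_state l1E j1E lt_lm lt_jd1 !andbT.
  have no_one : ((st_l s < m)%N && (st_j s < d.-1)%N) = false.
    by apply: contraFF not_one => /andP[? ?]; apply/andP; split; lia.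
  by rewrite big1 // => b _; rewrite no_one !andbF mul0r.
rewrite (sum_if_pred1 (a := state_zero s)); last by move=> b; rewrite /= eq_state.
have numE : n%:R - m%:R - (n - k)%N%:R + (st_l s)%:R + 1
             = (k.+1 - (m - st_l s))%N%:R :> R.
  by rewrite (natrB _ le_qk1) (natrB _ le_lm) (natrB _ (ltnW lt_kn)) -natr1; ring.
by rewrite numE.
Qed.

Lemma tail_mass_bin k s : (k <= n)%N -> (m - st_l s <= k)%N ->
  tail_mass k s * 'C(k, m - st_l s)%:R
  = (count_avoiding d k (m - st_l s) (st_j s))%:R.
Proof.
elim: k s => [|k IH] s le_kn le_qk.
  rewrite /tail_mass /tail_prod big_geq ?subn0 // mul1mx trmx_const mxE.
  by rewrite mul1r (_ : m - st_l s = 0)%N //; lia.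
rewrite tail_massS // count_avoidingS natrD mulrDl; congr (_ + _).
  case: ifP => [/andP[lt_0q lt_j1d] | _]; last by rewrite mul0r.
  have lt_lm : (st_l s < m)%N by lia.
  have [l1E j1E] := state_oneE lt_lm lt_j1d.
  have q1E : (m - st_l (state_one s))%N = (m - st_l s).-1 by rewrite l1E; lia.
  by rewrite mulrAC mul_bin_diag_div // mulrC -q1E -j1E IH //; lia.
have le_lm := st_l_le s.
rewrite mulrAC mul_bin_down_div mulrC.
case: (ltnP k (m - st_l s)) => [lt_kq | le_q_k].
  by rewrite bin_small // count_avoiding_eq0 // mulr0.
by rewrite (IH (state_zero s)) //; lia.
Qed.

End TailProducts.

Lemma bprob_fixed_ones (R : realFieldType) (p : R) n m (A : pred (outcome n)) :
  (forall x, A x -> nones x = m) ->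
  bprob p A = #|A|%:R * (p ^+ m * (1 - p) ^+ (n - m)).
Proof.
move=> onesA; rewrite /bprob (eq_bigr (fun _ => p ^+ m * (1 - p) ^+ (n - m))).
  by rewrite sumr_const mulr_natl.
by move=> x /onesA ->.
Qed.

Lemma bcondprob_fixed_ones (R : realFieldType) (p : R) n m (A B : pred (outcome n)) :
  0 < p -> p < 1 -> (forall x, B x -> nones x = m) ->
  bcondprob p A B = #|predI A B|%:R / #|B|%:R.
Proof.
move=> p_gt0 p_lt1 onesB.
have weight_neq0 : p ^+ m * (1 - p) ^+ (n - m) != 0.
  by rewrite mulf_neq0 // expf_neq0 // ?gt_eqF // subr_gt0.
rewrite /bcondprob !(@bprob_fixed_ones _ p n m) //; last by move=> x /andP[_ /onesB].
by rewrite invfM mulrACA divff // mulr1.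
Qed.

Lemma card_nones n m : #|(fun x : outcome n => nones x == m)| = 'C(n, m).
Proof.
rewrite -count_words_ones -card_word_of; apply: eq_card => x.
by rewrite !unfold_in /= nones_word_of.
Qed.

Lemma card_short_runs n m d : (0 < d)%N ->
  #|predI (fun x : outcome n => longest_run x < d)%N (fun x => nones x == m)|
  = count_avoiding d n m 0.
Proof.
move=> d_gt0; rewrite /count_avoiding -card_word_of; apply: eq_card => x.
rewrite !unfold_in /= nones_word_of andbC; congr (_ && _).
have runs_short := longest_run_ltE x d_gt0.
have avoids := avoids_runE d_gt0 (word_of x) d_gt0.
by apply/idP/idP => [/runs_short/avoids | /avoids/runs_short].
Qed.

Theorem mainTheorem1 (R : realFieldType) (p : R) (n m d : nat) :
  0 < p -> p < 1 -> (1 <= n)%N -> (m <= n)%N -> (1 <= d)%N ->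
  bcondprob p (fun x : outcome n => (longest_run x < d)%N)
              (fun x : outcome n => nones x == m)
  = ((xi0 R m d *m Nprod R n m d *m (ones_row R #|state m d|)^T) 0 0).
Proof.
move=> p_gt0 p_lt1 _ le_mn d_gt0.
rewrite (@bcondprob_fixed_ones _ _ _ m) //; last by move=> x /eqP.
rewrite card_short_runs // card_nones xi0_mulE Nprod_tail.
have := @tail_mass_bin R n m d d_gt0 n (state0 m d_gt0) (leqnn n).
rewrite /= subn0 => /(_ le_mn) <-.
by rewrite mulfK // pnatr_eq0 -lt0n bin_gt0.
Qed.
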